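(* For all $n\ge1$ and all $k,k'\in[n]$, the relations $\preceq_k$ and $\preceq_{k'}$ on $\mathfrak{S}_n$ coincide; that is, the posets $\textsf{Star}_k(n)$ and $\textsf{Star}_{k'}(n)$ are equal.
   Context: $\mathfrak{S}_n$ is the symmetric group on $[n]$, products taken right to left. For a pivot $k\in[n]$, a star factorization of $\pi\in\mathfrak{S}_n$ is an expression $\pi=g_1\cdots g_r$ with each $g_i$ a transposition $(k\ i)$, $i\neq k$; it is transitive if all $(k\ i)$, $i\in[n]\setminus\{k\}$, occur; $\star_k(\pi)$ is the set of transitive star factorizations of $\pi$ of the minimum possible length $n+m-2$, $m$ the number of cycles of $\pi$ (fixed points included). $\sigma\preceq_k\pi$ means there exist $\gamma\in\star_k(\sigma)$ and $\delta\in\star_k(\pi)$ with $\gamma$ a not necessarily contiguous subword of $\delta$; $\textsf{Star}_k(n)$ is $\mathfrak{S}_n$ with the relation $\preceq_k$. *)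

From mathcomp Require Import all_boot all_fingroup.
Set Implicit Arguments. Unset Strict Implicit. Unset Printing Implicit Defensive.
Local Open Scope group_scope.

(* Product of a word of permutations, taken right to left:
   prodRL [:: g1; ...; gr] acts as x |-> g1 (g2 (... (gr x))).
   (MathComp's s * t is "first s, then t", hence the order below.) *)
Definition prodRL (T : finType) (s : seq {perm T}) : {perm T} :=
  foldr (fun g acc => acc * g) 1 s.

(* Number of cycles of pi, fixed points included. *)
Definition ncycles (T : finType) (pi : {perm T}) : nat := #|porbits pi|.

Definition is_star_fact (n : nat) (k : 'I_n) (pi : {perm 'I_n})
    (s : seq {perm 'I_n}) : bool :=
  [&& all (fun g => [exists i : 'I_n, (i != k) && (g == tperm k i)]) s,
      [forall i : 'I_n, (i != k) ==> (tperm k i \in s)],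
      size s == n + ncycles pi - 2
    & prodRL s == pi].

Definition star_le (n : nat) (k : 'I_n) (sigma pi : {perm 'I_n}) : Prop :=
  exists gamma delta : seq {perm 'I_n},
    [/\ is_star_fact k sigma gamma, is_star_fact k pi delta & subseq gamma delta].

From mathcomp Require Import all_boot all_fingroup zify.
Set Implicit Arguments. Unset Strict Implicit. Unset Printing Implicit Defensive.
Local Open Scope group_scope.

(* The relation sigma <=_k pi has a description that does not mention the
   pivot: [merges_to pi sigma], i.e. sigma = pi * t_1 * ... * t_j for
   transpositions t_i with j = m(pi) - m(sigma), so that every step merges two
   cycles (m = number of cycles).
   - Deleting letters from a star word is a walk by transpositions whose length
     is the number of deleted letters; the length formula n + m - 2 forces it
     to merge cycles at every step (star_delete).
   - Conversely a merging step is undone by inserting a single pivot letter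
     (star_insert), so every star factorization of sigma lifts along such a
     walk to a star factorization of pi containing it (star_lift).
   - Every permutation has a star factorization for every pivot, constructed
     by induction on the set of points already treated (star_fact_on_exists). *)

Section PermutationWords.
Variable T : finType.
Implicit Types (a b c k z : T) (s x y : {perm T}) (w u v : seq {perm T}) (S : {set T}).

Lemma prodRL_cons g w : prodRL (g :: w) = prodRL w * g.
Proof. by []. Qed.

Lemma prodRL_cat u v : prodRL (u ++ v) = prodRL v * prodRL u.
Proof. by elim: u => [|g u IH]; rewrite ?mulg1 // cat_cons !prodRL_cons IH mulgA. Qed.

Lemma prodRL_insert u v g : prodRL (u ++ g :: v) = prodRL (u ++ v) * g ^ prodRL u.
Proof. by rewrite !prodRL_cat prodRL_cons conjgE !mulgA mulgK. Qed.

Lemma prodRL_fix u a : all (fun g : {perm T} => g a == a) u -> prodRL u a = a.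
Proof.
elim: u => [|g u IH] /=; first by rewrite perm1.
by move=> /andP [/eqP ga /IH ua]; rewrite permM ua.
Qed.

Lemma perm_fixing_all_but k x : (forall a, a != k -> x a = a) -> x = 1.
Proof.
move=> fix_x; apply/permP => a; rewrite perm1.
have [->|/fix_x //] := eqVneq a k; apply/eqP; apply: contraT => xk.
by have /perm_inj xkk := fix_x _ xk; rewrite xkk eqxx in xk.
Qed.

(* Multiplying by a transposition [(a b)], a <> b, merges two cycles when [a]
   and [b] lie in different cycles and splits one cycle otherwise. *)
Lemma ncycles_mul_tperm s a b :
  ncycles (s * tperm a b) + (a \notin porbit s b).*2 = ncycles s + (a != b).
Proof.
by rewrite /ncycles -porbitsV invMg tpermV -(porbitV s b) porbits_mul_tperm porbitsV.
Qed.

Lemma ncycles_mul_tperm_ge s a b : ncycles s <= (ncycles (s * tperm a b)).+1.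
Proof.
have := ncycles_mul_tperm s a b.
have [->|_] := eqVneq a b; first by rewrite porbit_id /=; lia.
by case: (a \in porbit s b) => /=; lia.
Qed.

Lemma ncycles_split s b : s b != b -> ncycles (s * tperm (s b) b) = (ncycles s).+1.
Proof.
move=> sb; have := ncycles_mul_tperm s (s b) b.
have := mem_porbit s 1 b; rewrite expg1 => ->.
by rewrite sb /=; lia.
Qed.

Lemma ncycles_gt0 s a : 0 < ncycles s.
Proof. by rewrite card_gt0; apply/set0Pn; exists (porbit s a); apply: imset_f. Qed.

Lemma ncycles1 : ncycles (1 : {perm T}) = #|T|.
Proof.
rewrite /ncycles card_imset // => a b /eqP.
rewrite eq_porbit_mem => /porbitP [i]; rewrite permX.
by elim: i => [|i IH] //=; rewrite perm1.
Qed.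

Inductive tperm_walk : nat -> {perm T} -> {perm T} -> Prop :=
| walk_nil x : tperm_walk 0 x x
| walk_cons j x y a b : a != b -> tperm_walk j (x * tperm a b) y -> tperm_walk j.+1 x y.

(* Walks are stable under right translation (conjugate every step). *)
Lemma tperm_walk_mulr j x y g : tperm_walk j x y -> tperm_walk j (x * g) (y * g).
Proof.
elim=> [x0|j0 x0 y0 a b ab _ IH]; first exact: walk_nil.
apply: (walk_cons (a := g a) (b := g b)); first by rewrite (inj_eq perm_inj).
rewrite -tpermJ -mulgA -conjgC mulgA; exact: IH.
Qed.

Lemma tperm_walk_ncycles j x y : tperm_walk j x y -> ncycles x <= ncycles y + j.
Proof.
elim=> [x0|j0 x0 y0 a b _ _ IH]; first by rewrite addn0.
by have := ncycles_mul_tperm_ge x0 a b; lia.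
Qed.

(* [merges_to pi sigma]: [sigma] arises from [pi] by a walk in which every
   step merges two cycles, i.e. a walk of the minimal length m(pi) - m(sigma).
   This relation does not mention any pivot. *)
Definition merges_to (pi sigma : {perm T}) : Prop :=
  exists j, tperm_walk j pi sigma /\ ncycles pi = ncycles sigma + j.

Definition star_letter k g : bool := [exists i, (i != k) && (g == tperm k i)].

(* Deleting letters from a star word is a walk between the two products whose
   length is the number of deleted letters: deleting the letter (k i) after a
   prefix [u] multiplies the product by (k i) conjugated by [prodRL u]. *)
Lemma star_delete k g d : all (star_letter k) d -> subseq g d ->
  tperm_walk (size d - size g) (prodRL d) (prodRL g).
Proof.
elim: d g => [|a d IH] g /=; first by move=> _ /eqP ->; exact: walk_nil.
move=> /andP [/existsP [i /andP [ik /eqP ->]] star_d].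
have skip : subseq g d -> tperm_walk ((size d).+1 - size g) (prodRL d * tperm k i) (prodRL g).
  move=> sub; rewrite subSn ?size_subseq //.
  apply: (walk_cons (a := k) (b := i)); first by rewrite eq_sym.
  by rewrite -mulgA tperm2 mulg1; exact: IH.
case: g skip => [|b g] skip; first by move=> _; exact/skip/sub0seq.
case: eqP => [-> sub|_]; last exact: skip.
by rewrite !prodRL_cons subSS; apply: tperm_walk_mulr; exact: IH.
Qed.

(* If the letter (k c) occurs in a star word, some prefix of it sends k to c:
   cut right after the first occurrence of (k c). *)
Lemma star_prefix k c w : all (star_letter k) w -> (c != k -> tperm k c \in w) ->
  exists u v, w = u ++ v /\ prodRL u k = c.
Proof.
move=> star_w kc_w; have [->|ck] := eqVneq c k; first by exists [::], w; rewrite perm1.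
elim: w star_w {kc_w}(kc_w ck) => [|g w IH] //= /andP [/existsP [i /andP [ik /eqP ->]] star_w].
have [<- _|ic] := eqVneq i c.
  by exists [:: tperm k i], w; rewrite prodRL_cons mul1g tpermL.
rewrite in_cons => /orP [/eqP/(congr1 (fun p : {perm T} => p k))|/(IH star_w)].
  by rewrite !tpermL => ci; rewrite ci eqxx in ic.
move=> [u [v [-> uk]]]; exists (tperm k i :: u), v; split=> //.
by rewrite prodRL_cons permM uk tpermD // eq_sym.
Qed.

Lemma star_insert k c z w : all (star_letter k) w -> (c != k -> tperm k c \in w) ->
  z != c -> exists u v, [/\ w = u ++ v, (prodRL u)^-1 z != k &
    prodRL (u ++ tperm k ((prodRL u)^-1 z) :: v) = prodRL w * tperm c z].
Proof.
move=> star_w kc_w zc; have [u [v [-> uk]]] := star_prefix star_w kc_w.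
exists u, v; split=> //; first by apply: contra zc => /eqP zk; rewrite -uk -zk permKV.
by rewrite prodRL_insert tpermJ permKV uk.
Qed.

Definition star_letter_in k (S : {set T}) g : bool := [exists i in S, g == tperm k i].

Lemma star_letter_in_sub k (S S' : {set T}) w : S \subset S' ->
  all (star_letter_in k S) w -> all (star_letter_in k S') w.
Proof.
move=> sub_S; apply: sub_all => g /existsP [i /andP [iS gi]].
by apply/existsP; exists i; rewrite gi (subsetP sub_S).
Qed.

(* A minimal transitive star factorization of [x] over the points [S] (with
   k outside [S]): it is one of the permutation induced by [x] on [k |: S],
   which has 2|S| + m(x) - |T| letters. For [S = [set~ k]] this is a star
   factorization in the sense of [is_star_fact]. *)
Definition star_fact_on k (S : {set T}) x w : bool :=
  [&& all (star_letter_in k S) w,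
      [forall i in S, tperm k i \in w],
      size w + #|T| == (#|S|).*2 + ncycles x
    & prodRL w == x].

Lemma star_fact_on0 k : star_fact_on k set0 1 [::].
Proof.
apply/and4P; split=> //; first by apply/forallP => i; rewrite inE.
by rewrite ncycles1 cards0.
Qed.

Lemma star_fact_on_fixed k S x b w : b \notin S -> x b = b ->
  star_fact_on k S x w -> star_fact_on k (b |: S) x [:: tperm k b, tperm k b & w].
Proof.
move=> bS xb /and4P [letters_w all_w /eqP size_w /eqP prod_w].
have b_bS : b \in b |: S by rewrite setU11.
apply/and4P; split.
- rewrite /= andbA andbb (star_letter_in_sub (subsetUr _ _) letters_w) andbT.
  by apply/existsP; exists b; rewrite b_bS eqxx.
- apply/forallP => i; apply/implyP; rewrite in_setU1 => /orP [/eqP ->|iS]; first exact: mem_head.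
  by rewrite !in_cons (implyP (forallP all_w i) iS) !orbT.
- by rewrite cardsU1 bS add1n doubleS !addSn -size_w.
- by rewrite !prodRL_cons -!mulgA tperm2 mulg1 prod_w.
Qed.

(* A new point [b] of a nontrivial cycle of [x]: factor [x * (x b, b)], which
   fixes [b] and has one cycle more, then insert the letter (k b). *)
Lemma star_fact_on_merge k S x b w : k \notin S -> b \notin S -> b != k ->
  x b != b -> (x b != k -> x b \in S) ->
  star_fact_on k S (x * tperm (x b) b) w -> exists w', star_fact_on k (b |: S) x w'.
Proof.
move=> kS bS bk xb xbS /and4P [letters_w all_w /eqP size_w /eqP prod_w].
have star_w : all (star_letter k) w.
  apply: sub_all letters_w => g /existsP [i /andP [iS gi]].
  by apply/existsP; exists i; rewrite gi andbT; apply: contraNneq kS => <-.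
have xb_w : x b != k -> tperm k (x b) \in w.
  by move=> /xbS xb_S; exact: (implyP (forallP all_w _) xb_S).
have bxb : b != x b by rewrite eq_sym.
have [u [v [wuv _ prod_uv]]] := star_insert star_w xb_w bxb.
have ub : (prodRL u)^-1 b = b.
  apply/(canLR (permK _))/esym; apply: prodRL_fix; apply/allP => g gu.
  have gw : g \in w by rewrite wuv mem_cat gu.
  have /existsP [i /andP [iS /eqP ->]] := allP letters_w g gw.
  have ib : i != b by apply: contraNneq bS => <-.
  by rewrite tpermD // eq_sym.
rewrite ub in prod_uv.
exists (u ++ tperm k b :: v); apply/and4P; split.
- move: letters_w; rewrite wuv !all_cat /= => /andP [lu lv].
  rewrite !(star_letter_in_sub (subsetUr [set b] S)) ?andbT //=.
  by apply/existsP; exists b; rewrite setU11 eqxx.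
- apply/forallP => i; apply/implyP; rewrite in_setU1 mem_cat in_cons.
  case/orP => [/eqP ->|iS]; first by rewrite eqxx orbT.
  by have := implyP (forallP all_w i) iS; rewrite wuv mem_cat => /orP [->|->]; rewrite ?orbT.
- move: size_w; rewrite ncycles_split // cardsU1 bS wuv !size_cat /= => size_w.
  by rewrite addnS addSn size_w add1n doubleS !addSn addnS.
- by rewrite prod_uv prod_w -mulgA tperm2 mulg1.
Qed.

Lemma star_fact_on_exists k S x : k \notin S ->
  (forall a, a \notin S -> a != k -> x a = a) -> exists w, star_fact_on k S x w.
Proof.
have [N] := ubnP #|S|; elim: N S x => // N IH S x lt_S kS fix_x.
have [S0|[b bS]] := set_0Vmem S.
  move: fix_x; rewrite S0 => fix_x; exists [::].
  by rewrite (perm_fixing_all_but (fun a => fix_x a (negbT (in_set0 a)))); exact: star_fact_on0.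
pose S' := S :\ b.
have bS' : b \notin S' by rewrite setD11.
have kS' : k \notin S' by rewrite in_setD1 (negbTE kS) andbF.
have lt_S' : #|S'| < N by move: lt_S; rewrite (cardsD1 b S) bS.
have bk : b != k by apply: contraNneq kS => <-.
have out_S' a : a \notin S' -> a = b \/ a \notin S.
  by rewrite in_setD1 negb_and negbK => /orP [/eqP|]; [left|right].
rewrite -(setD1K bS) -/S'.
have [xb|xb] := eqVneq (x b) b.
  have fix_x' a : a \notin S' -> a != k -> x a = a.
    by case/out_S' => [->|]; [rewrite xb|exact: fix_x].
  have [w fact_w] := IH S' x lt_S' kS' fix_x'.
  by exists [:: tperm k b, tperm k b & w]; apply: star_fact_on_fixed.
pose x' := x * tperm (x b) b.
have fix_x' a : a \notin S' -> a != k -> x' a = a.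
  case/out_S' => [-> _|aS ak]; first by rewrite permM tpermL.
  have xa := fix_x a aS ak.
  have ba : b != a by apply: contraNneq aS => <-.
  have xb_a : x b != a by apply: contra ba => /eqP xba; rewrite -xa in xba; rewrite (perm_inj xba).
  by rewrite permM xa tpermD.
have xbS' : x b != k -> x b \in S'.
  move=> xbk; apply: contraT => /out_S' [xbb|xbS]; first by rewrite xbb eqxx in xb.
  by have /perm_inj xbb := fix_x _ xbS xbk; rewrite xbb eqxx in xb.
have [w fact_w] := IH S' x' lt_S' kS' fix_x'.
exact: star_fact_on_merge kS' bS' bk xb xbS' fact_w.
Qed.

Lemma star_fact_on_setC1_size k x w :
  star_fact_on k [set~ k] x w -> size w = #|T| + ncycles x - 2.
Proof.
case/and4P => _ _ /eqP size_w _; have := ncycles_gt0 x k.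
have : 0 < #|T| by apply/card_gt0P; exists k.
by move: size_w; rewrite cardsC1 -subn1 -addnn; lia.
Qed.
End PermutationWords.

Section StarFactorizations.
Variable n : nat.
Implicit Types (k a b : 'I_n) (x y sigma pi : {perm 'I_n}) (g d : seq {perm 'I_n}).

Lemma star_fact_lift_step k a b x d : a != b ->
  ncycles x = (ncycles (x * tperm a b)).+1 -> is_star_fact k (x * tperm a b) d ->
  exists d', is_star_fact k x d' /\ subseq d d'.
Proof.
move=> ab count_x /and4P [star_d all_d /eqP size_d /eqP prod_d].
have a_d : a != k -> tperm k a \in d by move=> ak; move/forallP/(_ a): all_d; rewrite ak.
have ba : b != a by rewrite eq_sym.
have [u [v [du uk prod_uv]]] := star_insert star_d a_d ba.
exists (u ++ tperm k ((prodRL u)^-1 b) :: v).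
split; last by rewrite du cat_subseq ?subseq_refl ?subseq_cons.
apply/and4P; split.
- move: star_d; rewrite du !all_cat /= => /andP [-> ->]; rewrite andbT.
  by apply/existsP; exists ((prodRL u)^-1 b); rewrite uk eqxx.
- apply/forallP => i; apply/implyP => ik; move/forallP/(_ i): all_d.
  by rewrite ik du !mem_cat in_cons => /orP [->|->]; rewrite ?orbT.
- have := ltn_ord k; have := ncycles_gt0 (x * tperm a b) k.
  by move: size_d; rewrite du !size_cat /= => size_d; lia.
- by apply/eqP; rewrite prod_uv prod_d -mulgA tperm2 mulg1.
Qed.

Lemma star_lift k j x y g : tperm_walk j x y -> ncycles x = ncycles y + j ->
  is_star_fact k y g -> exists d, is_star_fact k x d /\ subseq g d.
Proof.
elim=> [{}x|{}j {}x {}y a b ab walk IH] count_x fact_g.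
  by exists g; rewrite subseq_refl.
have := tperm_walk_ncycles walk; have := ncycles_mul_tperm_ge x a b => ge bound.
have count_xt : ncycles (x * tperm a b) = ncycles y + j.
  by apply/eqP; rewrite eqn_leq bound -ltnS -addnS -count_x.
have [d1 [fact_d1 sub1]] := IH count_xt fact_g.
have [|d [fact_d sub]] := star_fact_lift_step ab _ fact_d1.
  by rewrite count_x count_xt addnS.
by exists d; split=> //; exact: subseq_trans sub1 sub.
Qed.

Lemma star_fact_exists k x : exists w, is_star_fact k x w.
Proof.
have kS : k \notin [set~ k] by rewrite !inE eqxx.
have fix_x a : a \notin [set~ k] -> a != k -> x a = a by rewrite !inE negbK => ->.
have [w fact_w] := star_fact_on_exists kS fix_x.
have /and4P [letters_w all_w _ /eqP prod_w] := fact_w.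
exists w; apply/and4P; split.
- apply: sub_all letters_w => g /existsP [i /andP [ik gi]].
  by apply/existsP; exists i; rewrite gi andbT -in_setC1.
- apply/forallP => i; apply/implyP => ik.
  by apply: (implyP (forallP all_w i)); rewrite in_setC1.
- by rewrite (star_fact_on_setC1_size fact_w) card_ord.
- by apply/eqP.
Qed.

Lemma star_le_merges k sigma pi : star_le k sigma pi <-> merges_to pi sigma.
Proof.
split=> [[g [d [fact_g fact_d sub]]]|[j [walk count]]]; last first.
  have [g fact_g] := star_fact_exists k sigma.
  by have [d [fact_d sub]] := star_lift walk count fact_g; exists g, d.
move: fact_g fact_d => /and4P [_ _ /eqP size_g /eqP prod_g].
move=> /and4P [star_d _ /eqP size_d /eqP prod_d].
exists (size d - size g); split.
  by rewrite -prod_g -prod_d; exact: (star_delete (k := k) star_d sub).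
have n_gt0 : 0 < n by apply: leq_ltn_trans (ltn_ord k).
have le_gd := size_subseq sub; rewrite size_g size_d in le_gd *.
by have := ncycles_gt0 sigma k; have := ncycles_gt0 pi k; lia.
Qed.
End StarFactorizations.

Theorem mainTheorem8 (n : nat) (k k' : 'I_n) (sigma pi : {perm 'I_n}) :
  star_le k sigma pi <-> star_le k' sigma pi.
Proof. by rewrite !star_le_merges. Qed.
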